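(* Let $\Bbbk$ be a field, let $\mathrm{Var}$ be a variety of $\Bbbk$-algebras with one binary product defined by polylinear identities, and $\text{tri-}\mathrm{Var}$ the corresponding replicated variety of tri-algebras. Let $X$ be a set, $\dot X$ a disjoint copy of $X$, $F=\mathrm{Var}\langle X\cup\dot X\rangle$, $\varphi:F\to F$ the algebra homomorphism with $\varphi(x)=\varphi(\dot x)=x$, $F^{(3)}$ the space $F$ with operations $f\vdash g=\varphi(f)g$, $f\dashv g=f\varphi(g)$, $f\perp g=fg$, and $V$ the subalgebra of $F^{(3)}$ generated by $\dot X$ (so that $V\cong \text{tri-}\mathrm{Var}\langle X\rangle$ via $\dot x\leftrightarrow x$). Let $S\subseteq V$, and let $(S)^{(3)}$ denote the ideal of the tri-algebra $V$ generated by $S$ (the smallest subspace of $V$ containing $S$ and closed under $v* j$ and $j* v$ for $v\in V$, $j$ in it, $*\in\{\vdash,\dashv,\perp\}$). Then $$(S)^{(3)}=(S\cup\varphi(S))\cap V,$$ where $(P)$ denotes the (two-sided) ideal of the algebra $F$ generated by a subset $P\subseteq F$.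
   Context: Tri-algebras: linear spaces with three bilinear operations $\dashv$ (=$\mu_{\{1\}}$), $\vdash$ (=$\mu_{\{2\}}$), $\perp$ (=$\mu_{\{1,2\}}$). For a polylinear $\Phi(x_1,\dots,x_n)$ in the free algebra with one binary operation $\mu$ and nonempty $H\subseteq\{1,\dots,n\}$, $\Phi_H$ is obtained by viewing each monomial as a binary tree, marking leaves $x_i$, $i\in H$, and replacing $\mu$ at each node by $\mu_S$, $S\subseteq\{1,2\}$ the set of branches containing a marked leaf (by $\mu_{\{1\}}$ if $S=\varnothing$). $\text{tri-}\mathrm{Var}$ consists of tri-algebras satisfying $(a* b)\vdash c=(a\star b)\vdash c$, $a\dashv(b* c)=a\dashv(b\star c)$ for all $*,\star\in\{\vdash,\dashv,\perp\}$, and $\Phi_H=0$ for each defining identity $\Phi$ of $\mathrm{Var}$ and each nonempty $H$. *)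

From HB Require Import structures.
From mathcomp Require Import all_boot all_order all_algebra.
Set Implicit Arguments. Unset Strict Implicit. Unset Printing Implicit Defensive.
Import GRing.Theory.
Local Open Scope ring_scope.

Record nalg (k : fieldType) := NAlg {
  nalg_sort :> lmodType k;
  nmul : nalg_sort -> nalg_sort -> nalg_sort;
  nmul_linl : forall (b : nalg_sort) (a : k) (x y : nalg_sort),
      nmul (a *: x + y) b = a *: nmul x b + nmul y b;
  nmul_linr : forall (b : nalg_sort) (a : k) (x y : nalg_sort),
      nmul b (a *: x + y) = a *: nmul b x + nmul b y
}.
Arguments nmul {k A} : rename.

(** Nonassociative monomials (binary trees with leaves x_i, i : nat). *)
Inductive mterm := MVar of nat | MMul of mterm & mterm.

Fixpoint leaves (t : mterm) : seq nat :=
  match t with MVar i => [:: i] | MMul t1 t2 => leaves t1 ++ leaves t2 end.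

(** A polynomial identity Phi(x_0,...,x_{n-1}) is a formal linear combination
    of monomials; it is polylinear when every monomial contains each of
    x_0,...,x_{n-1} exactly once. *)
Definition polylinear (k : fieldType) (n : nat) (p : seq (k * mterm)) : bool :=
  all (fun ct => perm_eq (leaves ct.2) (iota 0 n)) p.

Fixpoint meval (k : fieldType) (A : nalg k) (v : nat -> A) (t : mterm) : A :=
  match t with
  | MVar i => v i
  | MMul t1 t2 => nmul (meval v t1) (meval v t2)
  end.

Definition peval (k : fieldType) (A : nalg k) (v : nat -> A) (p : seq (k * mterm)) : A :=
  \sum_(ct <- p) ct.1 *: meval v ct.2.

Definition in_variety (k : fieldType) (Ids : nat -> seq (k * mterm) -> Prop)
  (A : nalg k) : Prop :=
  forall n p, Ids n p -> forall v : nat -> A, peval v p = 0.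

Definition is_hom (k : fieldType) (A B : nalg k) (g : A -> B) : Prop :=
  (forall (a : k) (x y : A), g (a *: x + y) = a *: g x + g y) /\
  (forall x y : A, g (nmul x y) = nmul (g x) (g y)).

Definition is_free (k : fieldType) (Ids : nat -> seq (k * mterm) -> Prop)
  (Y : Type) (F : nalg k) (gen : Y -> F) : Prop :=
  in_variety Ids F /\
  forall (A : nalg k), in_variety Ids A -> forall f : Y -> A,
    exists g : F -> A, [/\ is_hom g, (forall y, g (gen y) = f y) &
      forall g' : F -> A, is_hom g' -> (forall y, g' (gen y) = f y) ->
        forall u, g' u = g u].

Definition is_subspace (k : fieldType) (A : lmodType k) (P : A -> Prop) : Prop :=
  P 0 /\ forall (a : k) (x y : A), P x -> P y -> P (a *: x + y).

Definition gen_ideal (k : fieldType) (F : nalg k) (P : F -> Prop) (u : F) : Prop :=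
  forall I : F -> Prop, is_subspace I -> (forall p, P p -> I p) ->
    (forall f j, I j -> I (nmul f j)) -> (forall f j, I j -> I (nmul j f)) -> I u.

(** The three operations of F^(3):  f |- g = phi(f) g,  f -| g = f phi(g),
    f _|_ g = f g.  [tri_ops phi o] holds when o is one of them. *)
Definition tri_ops (k : fieldType) (F : nalg k) (phi : F -> F) (o : F -> F -> F) : Prop :=
  [\/ o = (fun f g => nmul (phi f) g), o = (fun f g => nmul f (phi g))
    | o = (fun f g => nmul f g)].

Definition Vsub (k : fieldType) (X : Type) (F : nalg k) (gen : X + X -> F)
  (phi : F -> F) (u : F) : Prop :=
  forall W : F -> Prop, is_subspace W -> (forall x, W (gen (inr x))) ->
    (forall o, tri_ops phi o -> forall f g, W f -> W g -> W (o f g)) -> W u.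

Definition tri_ideal (k : fieldType) (X : Type) (F : nalg k) (gen : X + X -> F)
  (phi : F -> F) (S : F -> Prop) (u : F) : Prop :=
  forall J : F -> Prop, (forall j, J j -> Vsub gen phi j) -> is_subspace J ->
    (forall s, S s -> J s) ->
    (forall o, tri_ops phi o -> forall v j, Vsub gen phi v -> J j ->
        J (o v j) /\ J (o j v)) -> J u.

(* Write erase for the endomorphism of F fixing every x and killing every
   dotted generator, and dot for the one sending both x and its copy to the
   dotted generator.  Then erase vanishes on V, phi (dot (erase w)) = erase w,
   and w - erase w lies in V for every w.  By induction over the ideal
   (S u phi(S)), each of its elements u has u - erase u in (S)^(3) and
   erase u = phi b for some b in (S)^(3); for u in V, erase u = 0.
   Conversely, (S u phi(S)) n V contains S and is closed under the three
   tri-operations, because phi is idempotent. *)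

From HB Require Import structures.
From mathcomp Require Import all_boot all_order all_algebra.
From mathcomp Require Import boolp.
Set Implicit Arguments. Unset Strict Implicit. Unset Printing Implicit Defensive.
Import GRing.Theory.
Local Open Scope ring_scope.

Section NalgTheory.
Variables (k : fieldType) (A : nalg k).

Lemma nmulDl (x y z : A) : nmul (x + y) z = nmul x z + nmul y z.
Proof. by have := nmul_linl z 1 x y; rewrite !scale1r. Qed.

Lemma nmulDr (x y z : A) : nmul z (x + y) = nmul z x + nmul z y.
Proof. by have := nmul_linr z 1 x y; rewrite !scale1r. Qed.

Lemma nmul0r (x : A) : nmul 0 x = 0.
Proof. by apply: (@addrI _ (nmul 0 x)); rewrite -nmulDl !addr0. Qed.

Lemma nmulr0 (x : A) : nmul x 0 = 0.
Proof. by apply: (@addrI _ (nmul x 0)); rewrite -nmulDr !addr0. Qed.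

Lemma nmul_sub_decomp (x x' y y' : A) :
  nmul x y - nmul x' y' =
  nmul (x - x') (y - y') + nmul (x - x') y' + nmul x' (y - y').
Proof.
rewrite -{1}(subrK x' x) -{1}(subrK y' y).
move: (x - x') (y - y') => x0 y0.
by rewrite !nmulDl !nmulDr addrA addrK addrAC.
Qed.

End NalgTheory.

Section Subspaces.
Variables (k : fieldType) (A B : lmodType k).

Definition lin_map (g : A -> B) : Prop :=
  forall a x y, g (a *: x + y) = a *: g x + g y.

Lemma lin_map0 (g : A -> B) : lin_map g -> g 0 = 0.
Proof.
move=> g_lin; have := g_lin 1 0 0; rewrite !scale1r addr0 => g00.
by apply: (@addrI _ (g 0)); rewrite addr0 -g00.
Qed.

Lemma subspaceD (P : A -> Prop) : is_subspace P ->
  forall x y, P x -> P y -> P (x + y).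
Proof. by case=> _ P_lin x y Px Py; have := P_lin 1 x y Px Py; rewrite scale1r. Qed.

Lemma subspaceI (P Q : A -> Prop) : is_subspace P -> is_subspace Q ->
  is_subspace (fun u => P u /\ Q u).
Proof.
case=> P0 P_lin [Q0 Q_lin]; split=> // a x y [Px Qx] [Py Qy].
by split; [apply: P_lin | apply: Q_lin].
Qed.

Lemma subspace_preim (g : A -> B) (P : B -> Prop) : lin_map g ->
  is_subspace P -> is_subspace (fun u => P (g u)).
Proof.
move=> g_lin [P0 P_lin]; split=> [|a x y Px Py]; first by rewrite lin_map0.
by rewrite g_lin; apply: P_lin.
Qed.

End Subspaces.

Lemma hom_comp (k : fieldType) (A B C : nalg k) (g : A -> B) (h : B -> C) :
  is_hom g -> is_hom h -> is_hom (fun x => h (g x)).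
Proof.
by move=> [g_lin g_mul] [h_lin h_mul]; split=> *; rewrite ?g_lin ?h_lin ?g_mul ?h_mul.
Qed.

Section Subalgebra.
Variables (k : fieldType) (A : nalg k) (W : A -> Prop).
Hypotheses (W_subspace : is_subspace W)
  (W_mul : forall x y, W x -> W y -> W (nmul x y)).

Definition in_sub : {pred A} := fun u => `[< W u >].

Fact in_sub_submod_closed : submod_closed in_sub.
Proof.
case: W_subspace => W0 W_lin; split; first exact/asboolP.
by move=> a x y /asboolP Wx /asboolP Wy; apply/asboolP/W_lin.
Qed.
HB.instance Definition _ :=
  GRing.isSubmodClosed.Build k A in_sub in_sub_submod_closed.

Record sub_type := SubElt { sub_val :> A; _ : sub_val \in in_sub }.
HB.instance Definition _ := [isSub for sub_val].
HB.instance Definition _ := [Choice of sub_type by <:].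
HB.instance Definition _ := [SubChoice_isSubLmodule of sub_type by <:].

Definition sub_mul (x y : sub_type) : sub_type :=
  SubElt (asboolT (W_mul (asboolW (valP x)) (asboolW (valP y)))).

Fact sub_mul_linl (y : sub_type) a (x x' : sub_type) :
  sub_mul (a *: x + x') y = a *: sub_mul x y + sub_mul x' y.
Proof. by apply: val_inj; rewrite /= nmul_linl. Qed.

Fact sub_mul_linr (y : sub_type) a (x x' : sub_type) :
  sub_mul y (a *: x + x') = a *: sub_mul y x + sub_mul y x'.
Proof. by apply: val_inj; rewrite /= nmul_linr. Qed.

Definition subalg : nalg k := NAlg sub_mul_linl sub_mul_linr.

Lemma sub_val_hom : is_hom (sub_val : subalg -> A).
Proof. by []. Qed.

Lemma subalg_in_variety Ids : in_variety Ids A -> in_variety Ids subalg.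
Proof.
move=> A_var n p Ids_p v; apply: val_inj.
have val_meval t : sub_val (meval v t) = meval (fun i => sub_val (v i)) t.
  by elim: t => //= t1 -> t2 ->.
rewrite raddf0 -(A_var n p Ids_p (fun i => sub_val (v i))) /peval.
by elim: p {Ids_p} => [|ct p IH]; rewrite ?big_nil ?big_cons //= -IH val_meval.
Qed.

End Subalgebra.

Section FreeAlgebra.
Variables (k : fieldType) (Ids : nat -> seq (k * mterm) -> Prop)
  (Y : Type) (F : nalg k) (gen : Y -> F).
Hypothesis F_free : is_free Ids gen.

Lemma free_hom_exists (f : Y -> F) :
  exists2 g : F -> F, is_hom g & forall y, g (gen y) = f y.
Proof. by have [g [g_hom g_gen _]] := F_free.2 F F_free.1 f; exists g. Qed.

Lemma free_hom_eq (g1 g2 : F -> F) : is_hom g1 -> is_hom g2 ->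
  (forall y, g1 (gen y) = g2 (gen y)) -> forall u, g1 u = g2 u.
Proof.
move=> g1_hom g2_hom g12 u.
have [g [_ _ g_uniq]] := F_free.2 F F_free.1 (fun y => g2 (gen y)).
by rewrite (g_uniq g1 g1_hom g12) (g_uniq g2 g2_hom (fun _ => erefl)).
Qed.

(* The subalgebra W lies in the variety, so the lift of gen to it followed
   by the inclusion is a homomorphism F -> F fixing gen, hence the identity. *)
Lemma free_alg_ind (W : F -> Prop) : is_subspace W -> (forall y, W (gen y)) ->
  (forall x y, W x -> W y -> W (nmul x y)) -> forall u, W u.
Proof.
move=> W_subspace W_gen W_mul u.
pose SW := subalg W_subspace W_mul.
have SW_var := @subalg_in_variety _ _ _ W_subspace W_mul _ F_free.1.
have [g [g_hom g_gen _]] := F_free.2 SW SW_var (fun y => SubElt (asboolT (W_gen y))).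
have g_id : forall u, sub_val (g u) = u.
  apply: free_hom_eq => [||y]; [exact: hom_comp g_hom (sub_val_hom _ _) | by [] |].
  by rewrite g_gen.
by rewrite -(g_id u); apply/asboolP/(valP (g u)).
Qed.

End FreeAlgebra.

Section GeneratedIdeal.
Variables (k : fieldType) (A : nalg k) (P : A -> Prop).

Lemma gen_ideal_subspace : is_subspace (gen_ideal P).
Proof.
split=> [I [I0 _] //|a x y Ix Iy I I_subspace IP I_mull I_mulr].
by case: (I_subspace) => _ I_lin; apply: I_lin; [apply: Ix | apply: Iy].
Qed.

Lemma gen_ideal_base p : P p -> gen_ideal P p.
Proof. by move=> Pp I _ IP _ _; apply: IP. Qed.

Lemma gen_ideal_mull f j : gen_ideal P j -> gen_ideal P (nmul f j).
Proof.
move=> Pj I I_subspace IP I_mull I_mulr.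
exact: I_mull (Pj I I_subspace IP I_mull I_mulr).
Qed.

Lemma gen_ideal_mulr f j : gen_ideal P j -> gen_ideal P (nmul j f).
Proof.
move=> Pj I I_subspace IP I_mull I_mulr.
exact: I_mulr (Pj I I_subspace IP I_mull I_mulr).
Qed.

End GeneratedIdeal.

Lemma gen_ideal_hom (k : fieldType) (A B : nalg k) (g : A -> B)
    (P : A -> Prop) (Q : B -> Prop) :
  is_hom g -> (forall p, P p -> Q (g p)) ->
  forall u, gen_ideal P u -> gen_ideal Q (g u).
Proof.
move=> [g_lin g_mul] PQ u Pu; apply: (Pu (fun u => gen_ideal Q (g u))).
- exact: subspace_preim g_lin (gen_ideal_subspace Q).
- by move=> p /PQ; apply: gen_ideal_base.
- by move=> f j Qj; rewrite g_mul; apply: gen_ideal_mull.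
- by move=> f j Qj; rewrite g_mul; apply: gen_ideal_mulr.
Qed.

Section TriAlgebra.
Variables (k : fieldType) (X : Type) (F : nalg k) (gen : X + X -> F) (phi : F -> F).

Local Notation V := (Vsub gen phi).

Lemma tri_ops_vdash : tri_ops phi (fun f g => nmul (phi f) g).
Proof. exact: Or31. Qed.

Lemma tri_ops_dashv : tri_ops phi (fun f g => nmul f (phi g)).
Proof. exact: Or32. Qed.

Lemma tri_ops_perp : tri_ops phi (fun f g => nmul f g).
Proof. exact: Or33. Qed.

Lemma Vsub_subspace : is_subspace V.
Proof.
split=> [W [W0 _] //|a x y Vx Vy W W_subspace W_gen W_op].
by case: (W_subspace) => _ W_lin; apply: W_lin; [apply: Vx | apply: Vy].
Qed.

Lemma Vsub_gen x : V (gen (inr x)).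
Proof. by move=> W _ W_gen _. Qed.

Lemma Vsub_op o : tri_ops phi o -> forall f g, V f -> V g -> V (o f g).
Proof.
move=> o_tri f g Vf Vg W W_subspace W_gen W_op.
by apply: (W_op o o_tri); [apply: Vf | apply: Vg].
Qed.

Lemma Vsub_vdash f g : V f -> V g -> V (nmul (phi f) g).
Proof. exact: (Vsub_op tri_ops_vdash). Qed.

Lemma Vsub_dashv f g : V f -> V g -> V (nmul f (phi g)).
Proof. exact: (Vsub_op tri_ops_dashv). Qed.

Lemma Vsub_mul f g : V f -> V g -> V (nmul f g).
Proof. exact: (Vsub_op tri_ops_perp). Qed.

Variables (S : F -> Prop).
Local Notation TI := (tri_ideal gen phi S).

Lemma tri_ideal_subspace : is_subspace TI.
Proof.
split=> [J _ [J0 _] //|a x y TIx TIy J J_V J_subspace JS J_op].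
by case: (J_subspace) => _ J_lin; apply: J_lin; [apply: TIx | apply: TIy].
Qed.

Lemma tri_ideal_base s : S s -> TI s.
Proof. by move=> Ss J _ _ JS _; apply: JS. Qed.

Lemma tri_ideal_op o : tri_ops phi o ->
  forall v j, V v -> TI j -> TI (o v j) /\ TI (o j v).
Proof.
move=> o_tri v j Vv TIj; split=> J J_V J_subspace JS J_op;
  by have [] := J_op o o_tri v j Vv (TIj J J_V J_subspace JS J_op).
Qed.

Lemma tri_ideal_vdash v j : V v -> TI j ->
  TI (nmul (phi v) j) /\ TI (nmul (phi j) v).
Proof. exact: (tri_ideal_op tri_ops_vdash). Qed.

Lemma tri_ideal_dashv v j : V v -> TI j ->
  TI (nmul v (phi j)) /\ TI (nmul j (phi v)).
Proof. exact: (tri_ideal_op tri_ops_dashv). Qed.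

Lemma tri_ideal_mul v j : V v -> TI j -> TI (nmul v j) /\ TI (nmul j v).
Proof. exact: (tri_ideal_op tri_ops_perp). Qed.

Lemma tri_ideal_Vsub : (forall s, S s -> V s) -> forall u, TI u -> V u.
Proof.
move=> S_V u TIu; apply: TIu => // [|o o_tri v j Vv Vj].
  exact: Vsub_subspace.
by split; apply: Vsub_op.
Qed.

End TriAlgebra.

Section ReplicatedIdeal.
Variables (k : fieldType) (Ids : nat -> seq (k * mterm) -> Prop)
  (X : Type) (F : nalg k) (gen : X + X -> F) (phi : F -> F).
(* gen (inl x) is the generator x and gen (inr x) its dotted copy. *)
Hypotheses (F_free : is_free Ids gen) (phi_hom : is_hom phi)
  (phi_genl : forall x, phi (gen (inl x)) = gen (inl x))
  (phi_genr : forall x, phi (gen (inr x)) = gen (inl x)).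

Variable S : F -> Prop.
Hypothesis S_V : forall s, S s -> Vsub gen phi s.

Local Notation V := (Vsub gen phi).
Local Notation TI := (tri_ideal gen phi S).
Local Notation SphiS := (fun w => S w \/ exists s, S s /\ w = phi s).
Local Notation GI := (gen_ideal SphiS).

Lemma phi_idem u : phi (phi u) = phi u.
Proof.
apply: (free_hom_eq F_free (hom_comp phi_hom phi_hom) phi_hom).
by case=> x; rewrite ?phi_genl ?phi_genr ?phi_genl.
Qed.

Lemma gen_ideal_phi u : GI u -> GI (phi u).
Proof.
apply: gen_ideal_hom => // p Sp; right.
by case: Sp => [Sp | [s [Ss ->]]]; [exists p | exists s; rewrite phi_idem].
Qed.

Lemma tri_ideal_gen_ideal u : TI u -> GI u.
Proof.
move=> TIu; suff [] : GI u /\ V u by [].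
apply: (TIu (fun u => GI u /\ V u)) => [j [] //||s Ss|o o_tri v j Vv [GIj Vj]].
- exact: subspaceI (gen_ideal_subspace SphiS) (Vsub_subspace gen phi).
- by split; [apply: gen_ideal_base; left | apply: S_V].
- split; split; try exact: Vsub_op.
    by case: o_tri => ->; apply: gen_ideal_mull => //; apply: gen_ideal_phi.
  by case: o_tri => ->; apply: gen_ideal_mulr => //; apply: gen_ideal_phi.
Qed.

Variables (erase dot : F -> F).
Hypotheses (erase_hom : is_hom erase) (dot_hom : is_hom dot)
  (erase_genl : forall x, erase (gen (inl x)) = gen (inl x))
  (erase_genr : forall x, erase (gen (inr x)) = 0)
  (dot_genl : forall x, dot (gen (inl x)) = gen (inr x))
  (dot_genr : forall x, dot (gen (inr x)) = gen (inr x)).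

Lemma erase_Vsub v : V v -> erase v = 0.
Proof.
move=> Vv; apply: (Vv (fun v => erase v = 0)) => [|x|o o_tri f g ef0 eg0].
- split=> [|a x y ex0 ey0]; first exact: lin_map0 erase_hom.1.
  by rewrite erase_hom.1 ex0 ey0 scaler0 addr0.
- exact: erase_genr.
- by case: o_tri => ->; rewrite erase_hom.2 ?ef0 ?eg0 ?nmulr0 ?nmul0r.
Qed.

Lemma erase_phi u : erase (phi u) = phi u.
Proof.
apply: (free_hom_eq F_free (hom_comp phi_hom erase_hom) phi_hom).
by case=> x; rewrite ?phi_genl ?phi_genr erase_genl.
Qed.

Lemma phi_dot_erase u : phi (dot (erase u)) = erase u.
Proof.
apply: (free_hom_eq F_free (hom_comp (hom_comp erase_hom dot_hom) phi_hom) erase_hom).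
case=> x; first by rewrite erase_genl dot_genl phi_genr.
by rewrite erase_genr (lin_map0 dot_hom.1) (lin_map0 phi_hom.1).
Qed.

Lemma Vsub_dot u : V (dot u).
Proof.
move: u; apply: (free_alg_ind F_free) => [|y|x y Vx Vy].
- exact: subspace_preim dot_hom.1 (Vsub_subspace gen phi).
- by case: y => x; rewrite ?dot_genl ?dot_genr; apply: Vsub_gen.
- by rewrite dot_hom.2; apply: Vsub_mul.
Qed.

Lemma lin_map_sub_erase : lin_map (fun u => u - erase u).
Proof. by move=> a x y; rewrite erase_hom.1 opprD addrACA -scalerBr. Qed.

(* Each term of the decomposition given by nmul_sub_decomp is a tri-product,
   since erase u = phi (dot (erase u)) with dot (erase u) in V. *)
Lemma Vsub_sub_erase u : V (u - erase u).
Proof.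
move: u; apply: (free_alg_ind F_free) => [|y|x y Vx Vy].
- exact: subspace_preim lin_map_sub_erase (Vsub_subspace gen phi).
- case: y => x; first by rewrite erase_genl subrr; case: (Vsub_subspace gen phi).
  by rewrite erase_genr subr0; apply: Vsub_gen.
- rewrite erase_hom.2 nmul_sub_decomp.
  have Vxy := Vsub_mul Vx Vy.
  have := Vsub_dashv Vx (Vsub_dot (erase y)); rewrite phi_dot_erase => Vx_ey.
  have := Vsub_vdash (Vsub_dot (erase x)) Vy; rewrite phi_dot_erase => Vex_y.
  have V_add := subspaceD (Vsub_subspace gen phi).
  by apply: (V_add) => //; apply: V_add.
Qed.

Definition erase_split (u : F) : Prop :=
  TI (u - erase u) /\ exists2 b, TI b & erase u = phi b.

Lemma erase_split_subspace : is_subspace erase_split.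
Proof.
have TI_subspace := tri_ideal_subspace gen phi S; have [TI0 TI_lin] := TI_subspace.
apply: subspaceI; first exact: subspace_preim lin_map_sub_erase TI_subspace.
split=> [|a x y [bx TIbx ex] [by_ TIby ey]].
  by exists 0 => //; rewrite (lin_map0 erase_hom.1) (lin_map0 phi_hom.1).
by exists (a *: bx + by_); [apply: TI_lin | rewrite erase_hom.1 ex ey phi_hom.1].
Qed.

Lemma erase_split_base p : SphiS p -> erase_split p.
Proof.
have [TI0 _] := tri_ideal_subspace gen phi S.
case=> [Sp | [s [Ss ->]]]; rewrite /erase_split.
  rewrite erase_Vsub ?subr0; last exact: S_V.
  by split; [apply: tri_ideal_base | exists 0 => //; rewrite (lin_map0 phi_hom.1)].
by rewrite erase_phi subrr; split=> //; exists s; first apply: tri_ideal_base.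
Qed.

Lemma erase_split_mull f j : erase_split j -> erase_split (nmul f j).
Proof.
move=> [TIj [b TIb ej]]; rewrite /erase_split erase_hom.2 nmul_sub_decomp.
have TI_add := subspaceD (tri_ideal_subspace gen phi S).
have efj := (tri_ideal_mul (Vsub_sub_erase f) TIj).1.
have := (tri_ideal_dashv (Vsub_sub_erase f) TIb).1; rewrite -ej => efej.
have := (tri_ideal_vdash (Vsub_dot (erase f)) TIj).1; rewrite phi_dot_erase => eefj.
split; first by apply: (TI_add) => //; apply: TI_add.
exists (nmul (dot (erase f)) b); first exact: (tri_ideal_mul (Vsub_dot _) TIb).1.
by rewrite phi_hom.2 phi_dot_erase ej.
Qed.

Lemma erase_split_mulr f j : erase_split j -> erase_split (nmul j f).
Proof.
move=> [TIj [b TIb ej]]; rewrite /erase_split erase_hom.2 nmul_sub_decomp.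
have TI_add := subspaceD (tri_ideal_subspace gen phi S).
have ejf := (tri_ideal_mul (Vsub_sub_erase f) TIj).2.
have := (tri_ideal_dashv (Vsub_dot (erase f)) TIj).2; rewrite phi_dot_erase => ejef.
have := (tri_ideal_vdash (Vsub_sub_erase f) TIb).2; rewrite -ej => eejf.
split; first by apply: (TI_add) => //; apply: TI_add.
exists (nmul b (dot (erase f))); first exact: (tri_ideal_mul (Vsub_dot _) TIb).2.
by rewrite phi_hom.2 phi_dot_erase ej.
Qed.

Lemma gen_ideal_Vsub_tri_ideal u : GI u -> V u -> TI u.
Proof.
move=> GIu Vu; have [] : erase_split u.
  apply: GIu; [exact: erase_split_subspace | exact: erase_split_base
    | exact: erase_split_mull | exact: erase_split_mulr].
by rewrite erase_Vsub // subr0.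
Qed.

End ReplicatedIdeal.

Theorem theorem4p1 (k : fieldType) (Ids : nat -> seq (k * mterm) -> Prop)
  (HIds : forall n p, Ids n p -> polylinear n p)
  (X : Type) (F : nalg k) (gen : X + X -> F) (Hfree : is_free Ids gen)
  (phi : F -> F) (Hphi : is_hom phi)
  (Hphi1 : forall x, phi (gen (inl x)) = gen (inl x))
  (Hphi2 : forall x, phi (gen (inr x)) = gen (inl x))
  (S : F -> Prop) (HS : forall s, S s -> Vsub gen phi s) :
  forall u : F, tri_ideal gen phi S u <->
    (gen_ideal (fun w => S w \/ exists s, S s /\ w = phi s) u /\ Vsub gen phi u).
Proof.
move=> u; split=> [TIu | [GIu Vu]].
  split; first exact: (tri_ideal_gen_ideal Hfree Hphi Hphi1 Hphi2 HS).
  exact: (tri_ideal_Vsub HS).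
have [erase erase_hom erase_gen] :=
  free_hom_exists Hfree (fun y => if y is inl x then gen (inl x) else 0).
have [dot dot_hom dot_gen] :=
  free_hom_exists Hfree (fun y => match y with inl x | inr x => gen (inr x) end).
exact: (gen_ideal_Vsub_tri_ideal Hfree Hphi Hphi1 Hphi2 HS erase_hom dot_hom
  (fun x => erase_gen (inl x)) (fun x => erase_gen (inr x))
  (fun x => dot_gen (inl x)) (fun x => dot_gen (inr x))).
Qed.
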